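(* Under the model below, for every batch $h$ and every packet index $k$ in that batch, $$\hat d_h^k - d_h^k \le \frac{(2M-1)L}{Nr},$$ i.e. every packet departs under MPGPS at most $(2M-1)L/(Nr)$ time units later than it departs under GPS.
   Context: Model. There are $K$ users (sessions) with separate FIFO queues, and $N$ servers (subcarriers), each transmitting $r$ bits per unit time, so the total service rate is $Nr$. All packets have the same length $L$ bits. Transmissions are error free. The same packet arrival sequence is fed to two systems. GPS (generalized processor sharing): a fluid system of total rate $Nr$; each user $k$ has a weight $\phi_k>0$, and at every instant each backlogged user $k$ is served at rate $Nr\,\phi_k/\sum_{j\in B}\phi_j$, where $B$ is the set of currently backlogged users. A packet's GPS departure time is the time its last bit is served in GPS. MPGPS (multi-server packetized GPS) with parameter $M\ge 1$: it is work conserving (servers are never idle while packets are queued). Whenever the servers become idle at a time $\tau$, among all packets queued at $\tau$ it selects the $\min\big(M,\sum_{k}\hat Q_k(\tau)\big)$ packets that would be the first to complete service in the corresponding GPS system if no further packets arrived after $\tau$ ($\hat Q_k(\tau)$ is the number of user-$k$ packets queued under MPGPS at $\tau$). These selected packets form one batch; a batch of $M_h$ packets is transmitted jointly over all $N$ servers, occupies the servers for $M_hL/(Nr)$ time units, and all its packets depart at the end of that period. Batches are indexed $h=1,2,\dots$; $f_h^k$ denotes the $k$-th packet of batch $h$, $\hat d_h^k$ its departure time under MPGPS, and $d_h^k$ its departure time under GPS. *)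

From Stdlib Require Import Reals List Arith Bool ClassicalEpsilon.
From Coquelicot Require Import Coquelicot.
Import ListNotations.
Open Scope R_scope.
Open Scope bool_scope.

(* ---------- Arrival sequence ----------
   Packets are indexed by n : nat in order of arrival: a n is the arrival
   time of packet n (nondecreasing, unbounded), u n < K its user. *)

Definition Rleb (x y : R) : bool := if Rle_dec x y then true else false.
Definition Rltb (x y : R) : bool := if Rlt_dec x y then true else false.

(* An index beyond which all packets arrive strictly after t
   (well defined when arrivals are nondecreasing and unbounded). *)
Definition horizon (a : nat -> R) (t : R) : nat :=
  epsilon (inhabits 0%nat) (fun n => t < a n).

Definition arrived_count (a : nat -> R) (u : nat -> nat) (k : nat) (t : R) : nat :=
  length (filter (fun m => Nat.eqb (u m) k && Rleb (a m) t) (seq 0 (horizon a t))).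

(* 1-based FIFO position of packet n in the queue of its user *)
Definition fifo_pos (u : nat -> nat) (n : nat) : nat :=
  length (filter (fun m => Nat.eqb (u m) (u n)) (seq 0 (S n))).

(* ---------- GPS fluid system ----------
   C k t : number of user-k packets arrived by time t (the arrival process fed
   to the fluid system); W k t : cumulative number of bits of user k served
   by time t. *)

Definition backlogged (L : R) (C : nat -> R -> nat) (W : nat -> R -> R)
  (k : nat) (t : R) : bool :=
  Rltb 0 (L * INR (C k t) - W k t).

Definition gps_rate (K N : nat) (r : R) (phi : nat -> R) (L : R)
  (C : nat -> R -> nat) (W : nat -> R -> R) (k : nat) (t : R) : R :=
  if backlogged L C W k t then
    INR N * r * phi k /
      fold_right Rplus 0 (map phi (filter (fun j => backlogged L C W j t) (seq 0 K)))
  else 0.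

Definition is_GPS (K N : nat) (r : R) (phi : nat -> R) (L : R)
  (C : nat -> R -> nat) (W : nat -> R -> R) : Prop :=
  forall k, (k < K)%nat ->
    (forall t, t <= 0 -> W k t = 0) /\
    (forall t, 0 <= L * INR (C k t) - W k t) /\
    (forall s t, s <= t ->
       is_RInt (gps_rate K N r phi L C W k) s t (W k t - W k s)).

Definition gps_dep (L : R) (u : nat -> nat) (W : nat -> R -> R) (n : nat) (t : R) : Prop :=
  0 <= t /\
  INR (fifo_pos u n) * L <= W (u n) t /\
  (forall t', t' < t -> W (u n) t' < INR (fifo_pos u n) * L).

(* ---------- MPGPS ----------
   Batches are indexed h = 0,1,2,... (the paper's h = 1,2,...); B h is the
   list of packets of batch h, s h the time the batch starts transmission. *)

Definition served_before (B : nat -> list nat) (h n : nat) : Prop :=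
  exists h', (h' < h)%nat /\ In n (B h').

Definition served_beforeb (B : nat -> list nat) (h n : nat) : bool :=
  existsb (fun h' => if in_dec Nat.eq_dec n (B h') then true else false) (seq 0 h).

Definition queued_count (a : nat -> R) (B : nat -> list nat) (h : nat) (tau : R) : nat :=
  length (filter (fun n => Rleb (a n) tau && negb (served_beforeb B h n))
                 (seq 0 (horizon a tau))).

Definition batch_time (N : nat) (r L : R) (B : nat -> list nat) (h : nat) : R :=
  INR (length (B h)) * L / (INR N * r).

Definition mpgps_dep (N : nat) (r L : R) (s : nat -> R) (B : nat -> list nat) (h : nat) : R :=
  s h + batch_time N r L B h.

(* (s, B) is an MPGPS schedule with parameter M.  Wh h is the GPS system fed
   with the arrivals up to time s h only ("no further arrivals after s h"). *)
Definition is_MPGPS (K N M : nat) (r : R) (phi : nat -> R) (L : R)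
  (a : nat -> R) (u : nat -> nat) (s : nat -> R) (B : nat -> list nat)
  (Wh : nat -> nat -> R -> R) : Prop :=
  s 0%nat = a 0%nat /\
  (forall n, exists h, In n (B h)) /\
  (forall h, NoDup (B h)) /\
  (forall h n, In n (B h) -> a n <= s h /\ ~ served_before B h n) /\
  (forall h, length (B h) = Nat.min M (queued_count a B h (s h))) /\
  (forall h, is_GPS K N r phi L (fun k t => arrived_count a u k (Rmin t (s h))) (Wh h)) /\
  (* the selected packets are the first to complete in that hypothetical GPS *)
  (forall h p q, In p (B h) -> a q <= s h -> ~ served_before B h q -> ~ In q (B h) ->
     forall tp tq, gps_dep L u (Wh h) p tp -> gps_dep L u (Wh h) q tq -> tp <= tq) /\
  (* work conservation: the next batch starts when the servers become idle if
     packets are queued then, otherwise at the next arrival *)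
  (forall h n, ~ served_before B (S h) n ->
     (forall m, (m < n)%nat -> served_before B (S h) m) ->
     s (S h) = Rmax (s h + batch_time N r L B h) (a n)).

From Stdlib Require Import Reals List Arith Lra Lia ClassicalEpsilon Classical.
From Coquelicot Require Import Coquelicot.
Import ListNotations.
Open Scope R_scope.

(* Fix a packet [n] of batch [h] with GPS departure time [d] and go back to the last batch [j]
   opening a "run": the servers were idle just before it, or the preceding batch holds a packet
   that GPS has not finished by [d]. From [j] to [h] batches are transmitted back to back, and all
   packets of these batches, together with [n], arrive no earlier than [T] with
   [s j <= T + M L / (N r)] and are finished by GPS at [d]; since GPS serves at most [N r] bits per
   unit time, [d - T] is at least their total transmission time. Adding the transmission of batch
   [h] itself, of at most [M] packets, gives the delay bound [(2M - 1) L / (N r)].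
   The key comparison is that a packet left waiting when a batch is formed finishes under GPS after
   every packet of that batch: the GPS system with arrivals frozen at the batch start coincides
   with the real one up to that time, and afterwards the packets are ordered by their weighted
   service. *)

Definition sumR (l : list nat) (f : nat -> R) : R := fold_right Rplus 0 (map f l).

Lemma sumR_nonneg (f : nat -> R) l : (forall j, In j l -> 0 <= f j) -> 0 <= sumR l f.
Proof.
  induction l as [|x l IH]; unfold sumR in *; simpl; intros H; [lra|].
  assert (0 <= f x) by auto. assert (0 <= fold_right Rplus 0 (map f l)) by auto. lra.
Qed.

Lemma sumR_ge_elem (f : nat -> R) l k :
  (forall j, In j l -> 0 <= f j) -> In k l -> f k <= sumR l f.
Proof.
  induction l as [|x l IH]; simpl; [tauto|]. intros H [<-|Hk].
  - assert (0 <= sumR l f) by (apply sumR_nonneg; auto). unfold sumR in *; simpl; lra.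
  - assert (0 <= f x) by (apply H; simpl; auto).
    assert (f k <= sumR l f) by (apply IH; auto). unfold sumR in *; simpl; lra.
Qed.

Lemma sumR_if (b : nat -> bool) (g : nat -> R) l :
  sumR l (fun k => if b k then g k else 0) = sumR (filter b l) g.
Proof. induction l as [|x l IH]; unfold sumR in *; simpl; auto. destruct (b x); simpl; rewrite IH; lra. Qed.

Lemma sumR_scal c (g : nat -> R) l : sumR l (fun k => c * g k) = c * sumR l g.
Proof. induction l as [|x l IH]; unfold sumR in *; simpl; [lra|]. rewrite IH; lra. Qed.

Lemma sumR_plus (f g : nat -> R) l : sumR l (fun k => f k + g k) = sumR l f + sumR l g.
Proof. induction l as [|x l IH]; unfold sumR in *; simpl; [lra|]. rewrite IH; lra. Qed.

Lemma sumR_app (f : nat -> R) l1 l2 : sumR (l1 ++ l2) f = sumR l1 f + sumR l2 f.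
Proof. induction l1 as [|x l IH]; unfold sumR in *; simpl; [lra|]. rewrite IH; lra. Qed.

Lemma sumR_le (f g : nat -> R) l : (forall k, In k l -> f k <= g k) -> sumR l f <= sumR l g.
Proof.
  induction l as [|x l IH]; unfold sumR in *; simpl; intros H; [lra|].
  assert (f x <= g x) by auto.
  assert (fold_right Rplus 0 (map f l) <= fold_right Rplus 0 (map g l)) by auto. lra.
Qed.

Lemma sumR_ext (f g : nat -> R) l : (forall k, In k l -> f k = g k) -> sumR l f = sumR l g.
Proof. induction l as [|x l IH]; unfold sumR in *; simpl; intros H; auto. rewrite H, IH; auto. Qed.

Lemma sumR_indicator_seq v n st :
  sumR (seq st n) (fun k => if Nat.eqb v k then 1 else 0) =
  if (Nat.leb st v && Nat.ltb v (st + n))%bool then 1 else 0.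
Proof.
  revert st. induction n as [|n IH]; intros st.
  - unfold sumR; simpl.
    destruct (Nat.leb_spec st v), (Nat.ltb_spec v (st + 0)); simpl; auto; lia.
  - simpl. unfold sumR in *; simpl. rewrite IH.
    destruct (Nat.eqb_spec v st) as [->|Hne].
    + rewrite Nat.leb_refl. replace (Nat.leb (S st) st) with false by (symmetry; apply Nat.leb_gt; lia).
      replace (Nat.ltb st (st + S n)) with true by (symmetry; apply Nat.ltb_lt; lia). simpl; lra.
    + destruct (Nat.leb_spec st v), (Nat.leb_spec (S st) v), (Nat.ltb_spec v (S st + n)),
        (Nat.ltb_spec v (st + S n)); simpl; try lra; lia.
Qed.

Lemma length_as_sumR_classes (c : nat -> nat) K l : (forall x, In x l -> (c x < K)%nat) ->
  INR (length l) = sumR (seq 0 K) (fun k => INR (length (filter (fun x => Nat.eqb (c x) k) l))).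
Proof.
  induction l as [|x l IH]; intros H.
  - simpl. symmetry. induction (seq 0 K) as [|y m IHm]; unfold sumR in *; simpl; auto. rewrite IHm; lra.
  - simpl length. rewrite S_INR, IH by (intros; apply H; simpl; auto).
    rewrite (sumR_ext (fun k => INR (length (filter (fun y => Nat.eqb (c y) k) (x :: l))))
                      (fun k => INR (length (filter (fun y => Nat.eqb (c y) k) l))
                                + (if Nat.eqb (c x) k then 1 else 0))).
    + rewrite sumR_plus, sumR_indicator_seq. pose proof (H x (or_introl eq_refl)).
      replace (Nat.leb 0 (c x) && Nat.ltb (c x) (0 + K))%bool with true; [simpl; lra|].
      symmetry. apply Bool.andb_true_iff. split; [apply Nat.leb_le | apply Nat.ltb_lt]; lia.
    + intros k _. simpl filter. destruct (Nat.eqb (c x) k); simpl length; try rewrite S_INR; lra.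
Qed.

Lemma NoDup_length_le_span (l : list nat) : NoDup l -> l <> [] ->
  exists lo hi, In lo l /\ In hi l /\ (lo <= hi)%nat /\ (length l <= S hi - lo)%nat.
Proof.
  intros Hnd Hne.
  assert (Hlo : exists lo, In lo l /\ forall p, In p l -> (lo <= p)%nat).
  { clear Hnd. induction l as [|x l IH]; [congruence|]. destruct l as [|y l'].
    - exists x; split; simpl; auto. intros p [<-|[]]; auto.
    - destruct IH as [m [Hm Hm']]; [congruence|]. exists (Nat.min x m). split.
      + destruct (Nat.min_spec x m) as [[_ ->]|[_ ->]]; simpl in *; auto.
      + intros p [<-|Hp]; [lia|]. specialize (Hm' p Hp). lia. }
  assert (Hhi : exists hi, In hi l /\ forall p, In p l -> (p <= hi)%nat).
  { clear Hnd Hlo. induction l as [|x l IH]; [congruence|]. destruct l as [|y l'].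
    - exists x; split; simpl; auto. intros p [<-|[]]; auto.
    - destruct IH as [m [Hm Hm']]; [congruence|]. exists (Nat.max x m). split.
      + destruct (Nat.max_spec x m) as [[_ ->]|[_ ->]]; simpl in *; auto.
      + intros p [<-|Hp]; [lia|]. specialize (Hm' p Hp). lia. }
  destruct Hlo as [lo [Hlo Hlo']], Hhi as [hi [Hhi Hhi']].
  exists lo, hi. repeat split; auto.
  assert (Hincl : incl l (seq lo (S hi - lo))).
  { intros p Hp. apply in_seq. specialize (Hlo' p Hp). specialize (Hhi' p Hp). lia. }
  pose proof (NoDup_incl_length Hnd Hincl) as Hlen. rewrite length_seq in Hlen. exact Hlen.
Qed.

Lemma least_witness (P : nat -> Prop) x : P x -> exists n, P n /\ forall m, (m < n)%nat -> ~ P m.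
Proof.
  induction x as [x IH] using (well_founded_induction lt_wf). intros Hx.
  destruct (classic (exists m, (m < x)%nat /\ P m)) as [[m [Hm Pm]]|Hn].
  - exact (IH m Hm Pm).
  - exists x; split; auto. intros m Hm Pm; apply Hn; eauto.
Qed.

Lemma Rle_0_of_le_eps x c : 0 < c -> (forall e, 0 < e -> x <= c * e) -> x <= 0.
Proof.
  intros Hc H. destruct (Rle_lt_dec x 0) as [Hx|Hx]; auto.
  specialize (H (x / (2 * c)) ltac:(apply Rdiv_lt_0_compat; lra)).
  assert (c * (x / (2 * c)) = x / 2) by (field; lra). lra.
Qed.

Lemma small_step_below (b : nat -> R) n c : 0 < c ->
  exists d, 0 < d /\ forall k, (k < n)%nat -> 0 < b k -> c * d < b k.
Proof.
  intros Hc. induction n as [|n IH].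
  - exists 1; split; [lra|]; intros; lia.
  - destruct IH as [d [Hd H]]. destruct (Rlt_dec 0 (b n)) as [Hb|Hb].
    + exists (Rmin d (b n / (2 * c))). split.
      { apply Rmin_pos; auto. apply Rdiv_lt_0_compat; lra. }
      intros k Hk Hbk. destruct (Nat.eq_dec k n) as [->|Hne].
      * apply Rle_lt_trans with (c * (b n / (2 * c))).
        { apply Rmult_le_compat_l; [lra|apply Rmin_r]. }
        assert (c * (b n / (2 * c)) = b n / 2) by (field; lra). lra.
      * apply Rle_lt_trans with (c * d).
        { apply Rmult_le_compat_l; [lra|apply Rmin_l]. }
        apply H; auto; lia.
    + exists d; split; auto. intros k Hk Hbk.
      destruct (Nat.eq_dec k n) as [->|Hne]; [lra|]. apply H; auto; lia.
Qed.

Lemma Rltb_true x y : Rltb x y = true <-> x < y.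
Proof. unfold Rltb; destruct (Rlt_dec x y); split; intros; auto; discriminate. Qed.

Lemma Rltb_false x y : Rltb x y = false <-> ~ x < y.
Proof. unfold Rltb; destruct (Rlt_dec x y); split; intros; auto; try discriminate; tauto. Qed.

Lemma Rleb_false x y : y < x -> Rleb x y = false.
Proof. intros. unfold Rleb. destruct (Rle_dec x y); auto. lra. Qed.

Lemma Rdiv_le_compat_r a b c : 0 < c -> a <= b -> a / c <= b / c.
Proof. intros. unfold Rdiv. apply Rmult_le_compat_r; auto. apply Rlt_le, Rinv_0_lt_compat; auto. Qed.

Lemma Rdiv_lt_compat_r a b c : 0 < c -> a < b -> a / c < b / c.
Proof. intros. unfold Rdiv. apply Rmult_lt_compat_r; auto. apply Rinv_0_lt_compat; auto. Qed.

Definition gps_system (K N : nat) (r : R) (phi : nat -> R) (L : R)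
  (C : nat -> R -> nat) (W : nat -> R -> R) : Prop :=
  (0 < N)%nat /\ 0 < r /\ 0 < L /\ (forall k, (k < K)%nat -> 0 < phi k) /\
  is_GPS K N r phi L C W.

Section GPS.
Context {K N : nat} {r L : R} {phi : nat -> R} {C : nat -> R -> nat} {W : nat -> R -> R}.
Hypothesis HW : gps_system K N r phi L C W.

Let HN : (0 < N)%nat := proj1 HW.
Let Hr : 0 < r := proj1 (proj2 HW).
Let HL : 0 < L := proj1 (proj2 (proj2 HW)).
Let Hphi : forall k, (k < K)%nat -> 0 < phi k := proj1 (proj2 (proj2 (proj2 HW))).
Let HGPS : is_GPS K N r phi L C W := proj2 (proj2 (proj2 (proj2 HW))).

Let HN_R : 0 < INR N := lt_0_INR N HN.

Lemma gps_capacity_pos : 0 < INR N * r.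
Proof. apply Rmult_lt_0_compat; auto. Qed.

Lemma gps_length_pos : 0 < L.
Proof. exact HL. Qed.

Lemma gps_weight_pos k : (k < K)%nat -> 0 < phi k.
Proof. exact (Hphi k). Qed.

Local Notation NR := (INR N * r).

Let weight t := sumR (filter (fun j => backlogged L C W j t) (seq 0 K)) phi.

Lemma gps_weight_ge k t : (k < K)%nat -> backlogged L C W k t = true ->
  phi k <= weight t /\ 0 < weight t.
Proof.
  intros Hk Hb. assert (phi k <= weight t).
  { apply sumR_ge_elem.
    - intros j Hj. apply filter_In in Hj as [Hj _]. apply in_seq in Hj. apply Rlt_le, Hphi; lia.
    - apply filter_In; split; auto. apply in_seq; lia. }
  split; auto. specialize (Hphi k Hk); lra.
Qed.

Lemma gps_rate_backlogged k t : backlogged L C W k t = true ->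
  gps_rate K N r phi L C W k t = NR * phi k / weight t.
Proof. intros Hb. unfold gps_rate. rewrite Hb. reflexivity. Qed.

Lemma gps_rate_bounds k t : (k < K)%nat -> 0 <= gps_rate K N r phi L C W k t <= NR.
Proof.
  intros Hk. pose proof gps_capacity_pos. pose proof (Hphi k Hk).
  destruct (backlogged L C W k t) eqn:Hb.
  - rewrite gps_rate_backlogged by auto. destruct (gps_weight_ge k t Hk Hb) as [H1 H2].
    split.
    + apply Rmult_le_pos; [nra | apply Rlt_le, Rinv_0_lt_compat; auto].
    + apply (Rmult_le_reg_r (weight t)); auto.
      replace (NR * phi k / weight t * weight t) with (NR * phi k) by (field; lra). nra.
  - unfold gps_rate; rewrite Hb. lra.
Qed.

Lemma gps_service_RInt k s t : (k < K)%nat -> s <= t ->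
  is_RInt (gps_rate K N r phi L C W k) s t (W k t - W k s).
Proof. intros Hk Hst. apply (HGPS k Hk). exact Hst. Qed.

Lemma gps_service_init k t : (k < K)%nat -> t <= 0 -> W k t = 0.
Proof. intros Hk Ht. apply (HGPS k Hk); auto. Qed.

Lemma gps_service_le_arrived k t : (k < K)%nat -> W k t <= L * INR (C k t).
Proof. intros Hk. pose proof (proj1 (proj2 (HGPS k Hk)) t). lra. Qed.

Lemma gps_service_nondecr k s t : (k < K)%nat -> s <= t -> W k s <= W k t.
Proof.
  intros Hk Hst. enough (0 <= W k t - W k s) by lra.
  apply (is_RInt_ge_0 (gps_rate K N r phi L C W k) s t); auto.
  + apply gps_service_RInt; auto.
  + intros; apply gps_rate_bounds; auto.
Qed.

Lemma gps_service_lipschitz k s t : (k < K)%nat -> s <= t -> W k t - W k s <= NR * (t - s).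
Proof.
  intros Hk Hst.
  assert (H : W k t - W k s <= scal (t - s) NR).
  { apply (is_RInt_le (gps_rate K N r phi L C W k) (fun _ => NR) s t); auto.
    - apply gps_service_RInt; auto.
    - exact (is_RInt_const s t NR).
    - intros; apply gps_rate_bounds; auto. }
  unfold scal in H; simpl in H; unfold mult in H; simpl in H. lra.
Qed.

Lemma gps_backlogged_share i j s t : (i < K)%nat -> (j < K)%nat -> s <= t ->
  (forall x, s < x < t -> backlogged L C W i x = true) ->
  (W j t - W j s) / phi j <= (W i t - W i s) / phi i.
Proof.
  intros Hi Hj Hst Hbl.
  pose proof (is_RInt_scal _ s t (/ phi j) _ (gps_service_RInt j s t Hj Hst)) as Ij.
  pose proof (is_RInt_scal _ s t (/ phi i) _ (gps_service_RInt i s t Hi Hst)) as Ii.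
  unfold scal in Ij, Ii; simpl in Ij, Ii; unfold mult in Ij, Ii; simpl in Ij, Ii.
  unfold Rdiv. rewrite (Rmult_comm (W j t - W j s)), (Rmult_comm (W i t - W i s)).
  apply (is_RInt_le _ _ s t _ _ Hst Ij Ii).
  intros x Hx. specialize (Hbl x Hx). pose proof (Hphi i Hi). pose proof (Hphi j Hj).
  destruct (gps_weight_ge i x Hi Hbl) as [_ Hw]. pose proof gps_capacity_pos.
  rewrite (gps_rate_backlogged i x Hbl).
  replace (/ phi i * (NR * phi i / weight x)) with (NR / weight x) by (field; lra).
  destruct (backlogged L C W j x) eqn:Hbj.
  - rewrite (gps_rate_backlogged j x Hbj). right; field; lra.
  - unfold gps_rate; rewrite Hbj, Rmult_0_r.
    apply Rlt_le, Rdiv_lt_0_compat; auto.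
Qed.

Lemma gps_rates_sum t :
  sumR (seq 0 K) (fun k => gps_rate K N r phi L C W k t) <= NR /\
  ((exists k, (k < K)%nat /\ backlogged L C W k t = true) ->
   sumR (seq 0 K) (fun k => gps_rate K N r phi L C W k t) = NR).
Proof.
  pose proof gps_capacity_pos.
  unfold gps_rate. rewrite sumR_if.
  change (fold_right Rplus 0 (map phi (filter (fun j => backlogged L C W j t) (seq 0 K))))
    with (weight t).
  rewrite (sumR_ext _ (fun k => NR / weight t * phi k)) by (intros; unfold Rdiv; ring).
  rewrite sumR_scal. fold (weight t).
  destruct (Rlt_dec 0 (weight t)) as [Hp|Hp].
  - replace (NR / weight t * weight t) with NR by (field; lra). split; auto; lra.
  - assert (Hw : weight t = 0).
    { enough (0 <= weight t) by lra. apply sumR_nonneg.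
      intros j Hj. apply filter_In in Hj as [Hj _]. apply in_seq in Hj. apply Rlt_le, Hphi; lia. }
    split.
    + rewrite Hw, Rmult_0_r. lra.
    + intros [k [Hk Hb]]. destruct (gps_weight_ge k t Hk Hb). lra.
Qed.

Lemma gps_work_RInt l s t : (forall k, In k l -> (k < K)%nat) -> s <= t ->
  is_RInt (fun x => sumR l (fun k => gps_rate K N r phi L C W k x)) s t
          (sumR l (fun k => W k t - W k s)).
Proof.
  intros Hl Hst. induction l as [|k l IH].
  - unfold sumR; simpl. pose proof (is_RInt_const s t 0) as H.
    unfold scal in H; simpl in H; unfold mult in H; simpl in H. rewrite Rmult_0_r in H. exact H.
  - unfold sumR; simpl. apply (is_RInt_plus (gps_rate K N r phi L C W k)).
    + apply gps_service_RInt; auto. apply Hl; simpl; auto.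
    + apply IH. intros; apply Hl; simpl; auto.
Qed.

Lemma gps_work_le s t : s <= t -> sumR (seq 0 K) (fun k => W k t - W k s) <= NR * (t - s).
Proof.
  intros Hst. pose proof (is_RInt_const s t NR) as Hc.
  unfold scal in Hc; simpl in Hc; unfold mult in Hc; simpl in Hc.
  pose proof (gps_work_RInt (seq 0 K) s t (fun k H => proj2 (proj1 (in_seq _ _ _) H)) Hst) as Hs.
  rewrite (Rmult_comm NR). apply (is_RInt_le _ _ s t _ _ Hst Hs Hc).
  intros x _. apply gps_rates_sum.
Qed.

Lemma gps_work_busy s t : s <= t ->
  (forall x, s < x < t -> exists k, (k < K)%nat /\ backlogged L C W k x = true) ->
  sumR (seq 0 K) (fun k => W k t - W k s) = NR * (t - s).
Proof.
  intros Hst Hb. pose proof (is_RInt_const s t NR) as Hc.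
  unfold scal in Hc; simpl in Hc; unfold mult in Hc; simpl in Hc.
  pose proof (gps_work_RInt (seq 0 K) s t (fun k H => proj2 (proj1 (in_seq _ _ _) H)) Hst) as Hs.
  apply (is_RInt_ext _ (fun _ => NR)) in Hs.
  - rewrite (Rmult_comm NR), <- (is_RInt_unique _ _ _ _ Hs). exact (is_RInt_unique _ _ _ _ Hc).
  - intros x Hx. rewrite Rmin_left, Rmax_right in Hx by auto. apply gps_rates_sum. auto.
Qed.

Lemma gps_departure_service k P t : (k < K)%nat ->
  INR P * L <= W k t -> (forall t', t' < t -> W k t' < INR P * L) -> W k t = INR P * L.
Proof.
  intros Hk H1 H2. destruct (Rle_lt_dec (W k t) (INR P * L)) as [H|H]; [lra|exfalso].
  pose proof gps_capacity_pos.
  set (e := (W k t - INR P * L) / (2 * NR)).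
  assert (0 < e) by (unfold e; apply Rdiv_lt_0_compat; lra).
  pose proof (gps_service_lipschitz k (t - e) t Hk ltac:(lra)). pose proof (H2 (t - e) ltac:(lra)).
  assert (NR * (t - (t - e)) = (W k t - INR P * L) / 2) by (unfold e; field; pose proof HN_R; lra). lra.
Qed.

Lemma gps_departure_exists k P : (k < K)%nat -> (1 <= P)%nat -> (exists t1, INR P * L <= W k t1) ->
  exists t, 0 <= t /\ INR P * L <= W k t /\ (forall t', t' < t -> W k t' < INR P * L).
Proof.
  intros Hk HP [t1 Ht1]. pose proof gps_capacity_pos.
  assert (HPL : 0 < INR P * L) by (apply Rmult_lt_0_compat; auto; apply lt_0_INR; lia).
  set (E := fun t => W k t < INR P * L).
  assert (Hb : bound E).
  { exists t1. intros x Hx. unfold E in Hx. destruct (Rle_lt_dec x t1); auto.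
    pose proof (gps_service_nondecr k t1 x Hk ltac:(lra)); lra. }
  assert (HE0 : E 0) by (unfold E; rewrite gps_service_init; auto; lra).
  destruct (completeness E Hb (ex_intro _ 0 HE0)) as [t0 [Hub Hlub]].
  assert (Hbelow : forall t', t' < t0 -> W k t' < INR P * L).
  { intros t' Ht'. destruct (classic (exists e, E e /\ t' < e)) as [[e [He Hte]]|Hn].
    - pose proof (gps_service_nondecr k t' e Hk ltac:(lra)). unfold E in He; lra.
    - exfalso. enough (t0 <= t') by lra. apply Hlub. intros x Hx.
      destruct (Rle_lt_dec x t'); auto. exfalso; apply Hn; eauto. }
  exists t0. split; [apply Hub; auto|]. split; auto.
  destruct (Rle_lt_dec (INR P * L) (W k t0)) as [H1|H1]; auto. exfalso.
  set (e := (INR P * L - W k t0) / (2 * NR)).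
  assert (0 < e) by (unfold e; apply Rdiv_lt_0_compat; lra).
  pose proof (gps_service_lipschitz k t0 (t0 + e) Hk ltac:(lra)).
  assert (NR * (t0 + e - t0) = (INR P * L - W k t0) / 2) by (unfold e; field; pose proof HN_R; lra).
  assert (E (t0 + e)) by (unfold E; lra). pose proof (Hub _ H4). lra.
Qed.

(* After [tau] user [k] would stay backlogged forever, so the system would serve at full rate
   [N r] more than the finite backlog present at [tau]. *)
Lemma gps_serves_arrived k P tau : (k < K)%nat ->
  (forall j t, tau <= t -> C j t = C j tau) ->
  INR P * L <= L * INR (C k tau) -> exists t1, INR P * L <= W k t1.
Proof.
  intros Hk HCc HP. apply NNPP. intros Hn.
  assert (Hlt : forall t, W k t < INR P * L).
  { intros t. destruct (Rlt_le_dec (W k t) (INR P * L)); auto. exfalso; apply Hn; eauto. }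
  pose proof gps_capacity_pos.
  set (backlog := sumR (seq 0 K) (fun j => L * INR (C j tau))).
  assert (Hbl : 0 <= backlog).
  { apply sumR_nonneg. intros j _. apply Rmult_le_pos; [lra|apply pos_INR]. }
  set (t := tau + (backlog + 1) / NR).
  assert (Ht : tau <= t).
  { unfold t. assert (0 < (backlog + 1) / NR) by (apply Rdiv_lt_0_compat; lra). lra. }
  assert (Hbusy := gps_work_busy tau t Ht).
  assert (Hserved : sumR (seq 0 K) (fun j => W j t - W j tau) <= backlog).
  { apply sumR_le. intros j Hj. apply in_seq in Hj.
    pose proof (gps_service_le_arrived j t ltac:(lia)) as Harr. rewrite (HCc j t Ht) in Harr.
    enough (0 <= W j tau) by lra.
    rewrite <- (gps_service_init j (Rmin 0 tau) ltac:(lia) (Rmin_l 0 tau)).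
    apply gps_service_nondecr; [lia|apply Rmin_r]. }
  assert (NR * (t - tau) = backlog + 1) by (unfold t; field; pose proof HN_R; lra).
  enough (sumR (seq 0 K) (fun j => W j t - W j tau) = NR * (t - tau)) by lra.
  apply Hbusy. intros x Hx. exists k. split; auto. apply Rltb_true.
  rewrite (HCc k x) by lra. specialize (Hlt x). lra.
Qed.

End GPS.

Section TwoSystems.
Context {K N : nat} {r L : R} {phi : nat -> R} {C C' : nat -> R -> nat} {W G : nat -> R -> R}.
Hypothesis HW : gps_system K N r phi L C W.
Hypothesis HG : gps_system K N r phi L C' G.
Variable tau : R.

Local Notation NR := (INR N * r).

Section Agreement.
Hypothesis HC : forall k t, (k < K)%nat -> t <= tau -> C' k t = C k t.
Hypothesis HC_step : forall t0, exists d, 0 < d /\ forall t k, t0 <= t < t0 + d -> C k t = C k t0.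

Let agree_upto t := forall t' k, t' <= t -> (k < K)%nat -> W k t' = G k t'.

(* Just after [t0] the arrivals are constant and the backlogged users stay backlogged (service is
   Lipschitz), so both systems run the same rate equations. *)
Lemma gps_agree_extend t0 : t0 < tau -> agree_upto t0 ->
  exists d, 0 < d /\ t0 + d <= tau /\ agree_upto (t0 + d).
Proof.
  intros Ht0 He. pose proof (gps_capacity_pos HW) as HNR.
  destruct (HC_step t0) as [d1 [Hd1 Hc1]].
  destruct (small_step_below (fun k => L * INR (C k t0) - W k t0) K NR HNR) as [d2 [Hd2 Hs]].
  set (d := Rmin (Rmin d1 d2) (tau - t0)).
  assert (Hd : 0 < d) by (unfold d; repeat apply Rmin_pos; lra).
  assert (Hdd1 : d <= d1) by (unfold d; eapply Rle_trans; [apply Rmin_l|apply Rmin_l]).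
  assert (Hdd2 : d <= d2) by (unfold d; eapply Rle_trans; [apply Rmin_l|apply Rmin_r]).
  assert (Hdt : d <= tau - t0) by (unfold d; apply Rmin_r).
  assert (Hbl : forall x j, t0 < x < t0 + d -> (j < K)%nat ->
            backlogged L C W j x = backlogged L C' G j x).
  { intros x j Hx Hj. unfold backlogged. rewrite HC, (Hc1 x j) by (auto; lra).
    pose proof (gps_service_lipschitz HW j t0 x Hj ltac:(lra)) as LW.
    pose proof (gps_service_lipschitz HG j t0 x Hj ltac:(lra)) as LG.
    pose proof (gps_service_nondecr HW j t0 x Hj ltac:(lra)) as MW.
    pose proof (gps_service_nondecr HG j t0 x Hj ltac:(lra)) as MG.
    pose proof (gps_service_le_arrived HW j t0 Hj) as AW.
    rewrite <- (He t0 j (Rle_refl _) Hj) in MG, LG.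
    destruct (Rlt_dec 0 (L * INR (C j t0) - W j t0)) as [Hp|Hp].
    - pose proof (Hs j Hj Hp). assert (NR * (x - t0) <= NR * d2) by (apply Rmult_le_compat_l; lra).
      rewrite (proj2 (Rltb_true _ _)), (proj2 (Rltb_true _ (_ - G j x))); auto; lra.
    - rewrite (proj2 (Rltb_false _ _)), (proj2 (Rltb_false _ (_ - G j x))); auto; lra. }
  exists (d / 2). split; [lra|]. split; [lra|].
  intros t' k Ht' Hk. destruct (Rle_lt_dec t' t0) as [Hle|Hlt]; [apply He; auto|].
  pose proof (gps_service_RInt HW k t0 t' Hk ltac:(lra)) as IW.
  pose proof (gps_service_RInt HG k t0 t' Hk ltac:(lra)) as IG.
  apply (is_RInt_ext _ (gps_rate K N r phi L C' G k)) in IW.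
  - pose proof (is_RInt_unique _ _ _ _ IW) as EW. pose proof (is_RInt_unique _ _ _ _ IG) as EG.
    rewrite (He t0 k (Rle_refl _) Hk) in EW. lra.
  - intros x Hx. rewrite Rmin_left, Rmax_right in Hx by lra. unfold gps_rate.
    rewrite (Hbl x k ltac:(lra) Hk), (filter_ext_in _ (fun j => backlogged L C' G j x)); auto.
    intros j Hj. apply in_seq in Hj. apply Hbl; [lra|lia].
Qed.

(* The supremum of the agreement times is itself an agreement time (both services are
   continuous) and, if it were below [tau], [gps_agree_extend] would push it further. *)
Lemma gps_agree_until k t : (k < K)%nat -> t <= tau -> W k t = G k t.
Proof.
  pose proof (gps_capacity_pos HW) as HNR.
  set (E := fun t => t <= tau /\ agree_upto t).
  assert (HE0 : E (Rmin 0 tau)).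
  { split; [apply Rmin_r|]. intros t' j Ht' Hj. pose proof (Rmin_l 0 tau).
    rewrite (gps_service_init HW), (gps_service_init HG); auto; lra. }
  assert (Hb : bound E) by (exists tau; intros x [Hx _]; auto).
  destruct (completeness E Hb (ex_intro _ _ HE0)) as [t0 [Hub Hlub]].
  assert (Htt : t0 <= tau) by (apply Hlub; intros x [Hx _]; auto).
  assert (Hbelow : forall t', t' < t0 -> agree_upto t').
  { intros t' Ht'. destruct (classic (exists e, E e /\ t' < e)) as [[e [[_ He] Hte]]|Hn].
    - intros t'' j H1 H2. apply He; auto; lra.
    - exfalso. enough (t0 <= t') by lra. apply Hlub. intros x Hx.
      destruct (Rle_lt_dec x t'); auto. exfalso; apply Hn; eauto. }
  assert (Hat : agree_upto t0).
  { intros t' j Ht' Hj. destruct (Rlt_le_dec t' t0) as [Hl|Hl]; [apply (Hbelow t'); auto; lra|].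
    replace t' with t0 by lra.
    enough (Rabs (W j t0 - G j t0) <= 0) by (pose proof (Rabs_pos (W j t0 - G j t0));
                                            unfold Rabs in *; destruct (Rcase_abs _); lra).
    apply (Rle_0_of_le_eps _ (2 * NR)); [lra|]. intros e He.
    pose proof (Hbelow (t0 - e) ltac:(lra) (t0 - e) j (Rle_refl _) Hj).
    pose proof (gps_service_lipschitz HW j (t0 - e) t0 Hj ltac:(lra)).
    pose proof (gps_service_lipschitz HG j (t0 - e) t0 Hj ltac:(lra)).
    pose proof (gps_service_nondecr HW j (t0 - e) t0 Hj ltac:(lra)).
    pose proof (gps_service_nondecr HG j (t0 - e) t0 Hj ltac:(lra)).
    unfold Rabs; destruct (Rcase_abs _); nra. }
  intros Hk Ht. destruct (Rle_lt_dec t t0) as [Hl|Hl]; [apply Hat; auto|].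
  destruct (gps_agree_extend t0 ltac:(lra) Hat) as [d [Hd [Hdt Hed]]].
  assert (t0 + d <= t0) by (apply Hub; split; auto). lra.
Qed.

End Agreement.

(* Typically [G] is [W] with arrivals frozen at [tau]. After [tau], user [kq] stays backlogged in
   [W] until it reaches its level and user [kx] stays backlogged in [G] until [tx], so
   [gps_backlogged_share] compares their weighted services in opposite directions. *)
Lemma gps_frozen_order kq kx (Pq Px : nat) d tq tx :
  (forall k t, (k < K)%nat -> t <= tau -> W k t = G k t) ->
  (kq < K)%nat -> (kx < K)%nat ->
  (forall t, tau <= t -> INR Pq * L <= L * INR (C kq t)) ->
  (forall t, tau <= t -> INR Px * L <= L * INR (C' kx t)) ->
  INR Pq * L <= G kq tq ->
  INR Px * L <= G kx tx -> (forall t', t' < tx -> G kx t' < INR Px * L) ->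
  tq <= tx -> INR Px * L <= W kx d -> INR Pq * L <= W kq d.
Proof.
  intros HWG Hkq Hkx Haq Hax Htq Htx Htx' Hle Hx.
  destruct (Rle_lt_dec (INR Pq * L) (W kq d)) as [Hq|Hq]; [exact Hq|exfalso].
  pose proof (gps_weight_pos HW kq Hkq) as Pq0. pose proof (gps_weight_pos HW kx Hkx) as Px0.
  destruct (Rle_lt_dec d tau) as [Hd|Hd].
  - rewrite (HWG kq d Hkq Hd) in Hq. rewrite (HWG kx d Hkx Hd) in Hx.
    destruct (Rle_lt_dec tx d) as [H1|H1]; [|specialize (Htx' d H1); lra].
    pose proof (gps_service_nondecr HG kq tq d Hkq ltac:(lra)). lra.
  - assert (A1 : (W kx d - W kx tau) / phi kx <= (W kq d - W kq tau) / phi kq).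
    { apply (gps_backlogged_share HW); auto; try lra. intros x Hx0.
      apply Rltb_true. pose proof (gps_service_nondecr HW kq x d Hkq ltac:(lra)).
      pose proof (Haq x ltac:(lra)). lra. }
    destruct (Rlt_le_dec tq tau) as [Ht|Ht].
    { pose proof (gps_service_nondecr HG kq tq tau Hkq ltac:(lra)).
      pose proof (gps_service_nondecr HW kq tau d Hkq ltac:(lra)).
      rewrite <- (HWG kq tau Hkq (Rle_refl _)) in H. lra. }
    assert (A2 : (G kq tq - G kq tau) / phi kq <= (G kx tq - G kx tau) / phi kx).
    { apply (gps_backlogged_share HG); auto; try lra. intros x Hx0.
      apply Rltb_true. pose proof (Htx' x ltac:(lra)). pose proof (Hax x ltac:(lra)). lra. }
    rewrite <- !(HWG _ tau) in A2 by (auto; lra).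
    assert (Gx : G kx tq <= INR Px * L).
    { rewrite <- (gps_departure_service HG kx Px tx Hkx Htx Htx').
      apply (gps_service_nondecr HG); auto. }
    assert (B1 : (INR Pq * L - W kq tau) / phi kq <= (G kq tq - W kq tau) / phi kq)
      by (apply Rdiv_le_compat_r; lra).
    assert (B2 : (G kx tq - W kx tau) / phi kx <= (INR Px * L - W kx tau) / phi kx)
      by (apply Rdiv_le_compat_r; lra).
    assert (B3 : (INR Px * L - W kx tau) / phi kx <= (W kx d - W kx tau) / phi kx)
      by (apply Rdiv_le_compat_r; lra).
    assert (B4 : (W kq d - W kq tau) / phi kq < (INR Pq * L - W kq tau) / phi kq)
      by (apply Rdiv_lt_compat_r; lra).
    lra.
Qed.

End TwoSystems.

Lemma fifo_pos_S (u : nat -> nat) x :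
  fifo_pos u x = S (length (filter (fun m => Nat.eqb (u m) (u x)) (seq 0 x))).
Proof. unfold fifo_pos. rewrite seq_S, filter_app, length_app. simpl. rewrite Nat.eqb_refl. simpl. lia. Qed.

Lemma fifo_pos_ge1 (u : nat -> nat) x : (1 <= fifo_pos u x)%nat.
Proof. rewrite fifo_pos_S; lia. Qed.

Lemma fifo_pos_lt (u : nat -> nat) x y : (x < y)%nat -> u x = u y -> (fifo_pos u x < fifo_pos u y)%nat.
Proof.
  intros Hxy Hu. rewrite (fifo_pos_S u y). unfold fifo_pos. apply le_n_S. rewrite <- Hu.
  replace (seq 0 y) with (seq 0 (S x) ++ seq (0 + S x) (y - S x)) by (rewrite <- seq_app; f_equal; lia).
  rewrite filter_app, length_app. lia.
Qed.

Lemma filter_length_mono {A} (f g : A -> bool) l :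
  (forall m, In m l -> f m = true -> g m = true) -> (length (filter f l) <= length (filter g l))%nat.
Proof.
  induction l as [|x l IH]; simpl; intros H; auto. destruct (f x) eqn:Hf.
  - rewrite (H x (or_introl eq_refl) Hf). simpl. apply le_n_S, IH; auto.
  - destruct (g x); simpl; [apply le_S|]; apply IH; auto.
Qed.

Section Arrivals.
Context {a : nat -> R} (u : nat -> nat).
Hypothesis Hmono : forall n m, (n <= m)%nat -> a n <= a m.
Hypothesis Hunb : forall T, exists n, T < a n.

Let count_upto k t n0 := length (filter (fun m => Nat.eqb (u m) k && Rleb (a m) t) (seq 0 n0)).

Lemma horizon_spec t : t < a (horizon a t).
Proof. unfold horizon. apply (epsilon_spec (inhabits 0%nat) (fun n => t < a n)). apply Hunb. Qed.

Lemma count_upto_split k t n1 n2 : (n1 <= n2)%nat ->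
  count_upto k t n2 = (count_upto k t n1 +
    length (filter (fun m => Nat.eqb (u m) k && Rleb (a m) t) (seq n1 (n2 - n1))))%nat.
Proof.
  intros H. unfold count_upto. replace n2 with (n1 + (n2 - n1))%nat at 1 by lia.
  rewrite seq_app, filter_app, length_app. reflexivity.
Qed.

Lemma count_upto_stable k t n1 n2 : t < a n1 -> (n1 <= n2)%nat -> count_upto k t n2 = count_upto k t n1.
Proof.
  intros Ht Hn. rewrite (count_upto_split k t n1 n2 Hn).
  enough (Hnil : filter (fun m => Nat.eqb (u m) k && Rleb (a m) t) (seq n1 (n2 - n1)) = [])
    by (rewrite Hnil; simpl; lia).
  rewrite <- (filter_false (seq n1 (n2 - n1))). apply filter_ext_in. intros m Hm. apply in_seq in Hm.
  rewrite Rleb_false, Bool.andb_false_r; [reflexivity|].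
  pose proof (Hmono n1 m ltac:(lia)). lra.
Qed.

Lemma arrived_count_upto k t n0 : t < a n0 -> arrived_count a u k t = count_upto k t n0.
Proof.
  intros Ht. unfold arrived_count. fold (count_upto k t (horizon a t)).
  pose proof (horizon_spec t).
  destruct (Nat.le_ge_cases n0 (horizon a t)).
  - apply count_upto_stable; auto.
  - symmetry; apply count_upto_stable; auto.
Qed.

Lemma fifo_pos_le_arrived x t : a x <= t -> (fifo_pos u x <= arrived_count a u (u x) t)%nat.
Proof.
  intros Hx. pose proof (horizon_spec t) as Hh. rewrite (arrived_count_upto _ _ _ Hh).
  assert (Hx_h : (x < horizon a t)%nat).
  { destruct (Nat.lt_ge_cases x (horizon a t)) as [H|H]; auto. pose proof (Hmono _ _ H). lra. }
  rewrite (count_upto_split _ _ (S x)) by lia.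
  enough (fifo_pos u x = count_upto (u x) t (S x)) by lia.
  unfold fifo_pos, count_upto. f_equal. apply filter_ext_in. intros m Hm. apply in_seq in Hm.
  unfold Rleb. destruct (Rle_dec (a m) t); [symmetry; apply Bool.andb_true_r|].
  pose proof (Hmono m x ltac:(lia)). lra.
Qed.

Lemma arrived_lt_fifo_pos x t : t < a x -> (arrived_count a u (u x) t < fifo_pos u x)%nat.
Proof.
  intros Hx. rewrite (arrived_count_upto _ _ _ Hx), fifo_pos_S. unfold count_upto. apply le_n_S.
  apply filter_length_mono. intros m _ Hm. apply Bool.andb_true_iff in Hm. tauto.
Qed.

Lemma arrived_count_right_const (t0 : R) : exists d, 0 < d /\
  (forall t k, t0 <= t < t0 + d -> arrived_count a u k t = arrived_count a u k t0).
Proof.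
  set (n0 := horizon a (t0 + 1)). pose proof (horizon_spec (t0 + 1)) as Hn0. fold n0 in Hn0.
  destruct (small_step_below (fun m => a m - t0) n0 1 ltac:(lra)) as [d [Hd Hs]].
  exists (Rmin d 1). split; [apply Rmin_pos; lra|]. intros t k Ht.
  pose proof (Rmin_l d 1). pose proof (Rmin_r d 1).
  rewrite (arrived_count_upto k t n0), (arrived_count_upto k t0 n0) by lra.
  unfold count_upto. f_equal. apply filter_ext_in. intros m Hm. apply in_seq in Hm. f_equal.
  unfold Rleb. destruct (Rle_dec (a m) t), (Rle_dec (a m) t0); auto; exfalso.
  - specialize (Hs m ltac:(lia) ltac:(lra)). lra.
  - lra.
Qed.
End Arrivals.

(* Per user, the packets of [S] have distinct FIFO positions, so between [T] and [d] the user is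
   served at least [L] bits per packet of [S]; the total service is at most [N r (d - T)]. *)
Lemma gps_packets_work_bound {K N r L phi C W} (HW : gps_system K N r phi L C W)
  (u : nat -> nat) S T d : T <= d -> NoDup S ->
  (forall x, In x S -> (u x < K)%nat) ->
  (forall x, In x S -> INR (fifo_pos u x) * L <= W (u x) d) ->
  (forall x, In x S -> W (u x) T <= (INR (fifo_pos u x) - 1) * L) ->
  INR (length S) * L <= INR N * r * (d - T).
Proof.
  intros HTd Hnd HK Hd HT.
  rewrite (length_as_sumR_classes u K S HK), Rmult_comm, <- sumR_scal.
  eapply Rle_trans; [|apply (gps_work_le HW T d HTd)].
  apply sumR_le. intros k Hk. apply in_seq in Hk.
  set (Sk := filter (fun x => Nat.eqb (u x) k) S).
  assert (HSk : forall x, In x Sk -> In x S /\ u x = k).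
  { intros x Hx. apply filter_In in Hx as [H1 H2]. apply Nat.eqb_eq in H2. auto. }
  destruct Sk as [|x0 l] eqn:ESk.
  - simpl. pose proof (gps_service_nondecr HW k T d ltac:(lia) HTd). lra.
  - rewrite <- ESk in *.
    assert (Hnd' : NoDup (map (fifo_pos u) Sk)).
    { apply NoDup_map_NoDup_ForallPairs; [|apply NoDup_filter; auto].
      intros x y Hx Hy Hxy. apply HSk in Hx as [_ Hx]. apply HSk in Hy as [_ Hy].
      destruct (Nat.lt_trichotomy x y) as [H|[H|H]]; auto.
      - pose proof (fifo_pos_lt u x y H ltac:(congruence)). lia.
      - pose proof (fifo_pos_lt u y x H ltac:(congruence)). lia. }
    destruct (NoDup_length_le_span _ Hnd') as [lo [hi [Hlo [Hhi [Hlh Hlen]]]]];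
      [rewrite ESk; simpl; congruence|].
    apply in_map_iff in Hlo as [xl [Exl Hxl]]. apply in_map_iff in Hhi as [xh [Exh Hxh]].
    destruct (HSk xl Hxl) as [Sl Ul]. destruct (HSk xh Hxh) as [Sh Uh].
    pose proof (Hd xh Sh) as A1. pose proof (HT xl Sl) as A2.
    rewrite Uh, Exh in A1. rewrite Ul, Exl in A2.
    rewrite length_map in Hlen. apply le_INR in Hlen.
    rewrite minus_INR, S_INR in Hlen by lia. pose proof (gps_length_pos HW). nra.
Qed.

Lemma gps_service_before_arrival {K N r L phi a u W}
  (HW : gps_system K N r phi L (arrived_count a u) W)
  (Hu : forall n, (u n < K)%nat)
  (Hmono : forall n m, (n <= m)%nat -> a n <= a m) (Hunb : forall T, exists n, T < a n)
  x T : T <= a x -> W (u x) T <= (INR (fifo_pos u x) - 1) * L.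
Proof.
  intros HT. pose proof (gps_capacity_pos HW) as HNR. pose proof (gps_length_pos HW).
  enough (W (u x) T - (INR (fifo_pos u x) - 1) * L <= 0) by lra.
  apply (Rle_0_of_le_eps _ (INR N * r)); auto. intros e He.
  pose proof (gps_service_lipschitz HW (u x) (T - e) T (Hu x) ltac:(lra)).
  pose proof (gps_service_le_arrived HW (u x) (T - e) (Hu x)).
  pose proof (arrived_lt_fifo_pos u Hmono Hunb x (T - e) ltac:(lra)) as Hlt.
  apply le_INR in Hlt. rewrite S_INR in Hlt.
  assert (L * INR (arrived_count a u (u x) (T - e)) <= L * (INR (fifo_pos u x) - 1))
    by (apply Rmult_le_compat_l; lra).
  replace (INR N * r * (T - (T - e))) with (INR N * r * e) in * by ring. lra.
Qed.

Lemma not_served_before_antitone (B : nat -> list nat) x i j :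
  (i <= j)%nat -> ~ served_before B j x -> ~ served_before B i x.
Proof. intros Hij Hn [h' [Hh' Hin]]. apply Hn. exists h'. split; auto; lia. Qed.

Section MPGPS.
Context {K N M : nat} {r L : R} {phi : nat -> R} {a : nat -> R} {u : nat -> nat}
  {W : nat -> R -> R} {s : nat -> R} {B : nat -> list nat} {Wh : nat -> nat -> R -> R}.
Hypothesis HN : (0 < N)%nat.
Hypothesis Hr : 0 < r.
Hypothesis HL : 0 < L.
Hypothesis Hphi : forall k, (k < K)%nat -> 0 < phi k.
Hypothesis Hu : forall n, (u n < K)%nat.
Hypothesis Hmono : forall n m, (n <= m)%nat -> a n <= a m.
Hypothesis Hunb : forall T, exists n, T < a n.
Hypothesis HW : is_GPS K N r phi L (arrived_count a u) W.
Hypothesis HMP : is_MPGPS K N M r phi L a u s B Wh.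

Local Notation NR := (INR N * r).
Local Notation bt := (batch_time N r L B).

Let HWsys : gps_system K N r phi L (arrived_count a u) W :=
  conj HN (conj Hr (conj HL (conj Hphi HW))).

Lemma mpgps_start : s 0%nat = a 0%nat.
Proof. apply HMP. Qed.

Lemma mpgps_batch_queued h n : In n (B h) -> a n <= s h /\ ~ served_before B h n.
Proof. apply HMP. Qed.

Lemma mpgps_batch_NoDup h : NoDup (B h).
Proof. apply HMP. Qed.

Lemma mpgps_batch_size h : length (B h) = Nat.min M (queued_count a B h (s h)).
Proof. apply HMP. Qed.

Lemma mpgps_frozen_gps h :
  gps_system K N r phi L (fun k t => arrived_count a u k (Rmin t (s h))) (Wh h).
Proof. do 4 (split; [auto|]). apply HMP. Qed.

Lemma mpgps_selection h p q : In p (B h) -> a q <= s h -> ~ served_before B h q -> ~ In q (B h) ->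
  forall tp tq, gps_dep L u (Wh h) p tp -> gps_dep L u (Wh h) q tq -> tp <= tq.
Proof. apply HMP. Qed.

Lemma mpgps_work_conserving h n : ~ served_before B (S h) n ->
  (forall m, (m < n)%nat -> served_before B (S h) m) -> s (S h) = Rmax (s h + bt h) (a n).
Proof. apply HMP. Qed.

Lemma mpgps_batch_disjoint x i j : In x (B i) -> In x (B j) -> i = j.
Proof.
  intros Hi Hj. destruct (Nat.lt_trichotomy i j) as [H|[H|H]]; auto; exfalso.
  - apply (proj2 (mpgps_batch_queued j x Hj)). exists i; auto.
  - apply (proj2 (mpgps_batch_queued i x Hi)). exists j; auto.
Qed.

Lemma batch_time_le h : bt h <= INR M * (L / NR).
Proof.
  unfold batch_time, Rdiv. rewrite Rmult_assoc. apply Rmult_le_compat_r.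
  - apply Rmult_le_pos; [lra|]. apply Rlt_le, Rinv_0_lt_compat, (gps_capacity_pos HWsys).
  - apply le_INR. rewrite mpgps_batch_size. lia.
Qed.

Lemma mpgps_frozen_departure m x : a x <= s m -> exists t, gps_dep L u (Wh m) x t.
Proof.
  intros Hx. pose proof (mpgps_frozen_gps m) as HG.
  apply (gps_departure_exists HG (u x) _ (Hu x) (fifo_pos_ge1 u x)).
  apply (gps_serves_arrived HG (u x) _ (s m) (Hu x)).
  - intros j t Ht. rewrite Rmin_right, Rmin_left by lra. reflexivity.
  - rewrite Rmin_left by lra. rewrite Rmult_comm. apply Rmult_le_compat_l; [lra|].
    apply le_INR, (fifo_pos_le_arrived u Hmono Hunb x _ Hx).
Qed.

Definition gps_done_by d x := INR (fifo_pos u x) * L <= W (u x) d.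

(* The frozen system [Wh m] serves [x] after [q] by the selection rule, and it coincides with [W]
   up to [s m]. *)
Lemma mpgps_unselected_done_later m q x d : In q (B m) -> ~ served_before B (S m) x ->
  a x <= s m -> gps_done_by d x -> gps_done_by d q.
Proof.
  intros Hq Hx Hax Hdx.
  assert (HxBm : ~ In x (B m)) by (intros H; apply Hx; exists m; auto).
  assert (Hxm : ~ served_before B m x) by (apply (not_served_before_antitone B x m (S m)); auto).
  pose proof (mpgps_frozen_gps m) as HG.
  pose proof (proj1 (mpgps_batch_queued m q Hq)) as Haq.
  destruct (mpgps_frozen_departure m q Haq) as [tq Htq].
  destruct (mpgps_frozen_departure m x Hax) as [tx Htx].
  assert (Hle : tq <= tx) by (apply (mpgps_selection m q x Hq Hax Hxm HxBm); auto).
  assert (Harr : forall y t, a y <= s m -> s m <= t ->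
            INR (fifo_pos u y) * L <= L * INR (arrived_count a u (u y) t)).
  { intros y t Hy Ht. rewrite Rmult_comm. apply Rmult_le_compat_l; [lra|].
    apply le_INR, (fifo_pos_le_arrived u Hmono Hunb y); lra. }
  assert (HWG : forall k t, (k < K)%nat -> t <= s m -> W k t = Wh m k t).
  { apply (gps_agree_until HWsys HG (s m)); [|exact (arrived_count_right_const u Hmono Hunb)].
    intros k t _ Ht. rewrite Rmin_left by exact Ht. reflexivity. }
  apply (gps_frozen_order HWsys HG (s m) (u q) (u x) (fifo_pos u q) (fifo_pos u x) d tq tx HWG
           (Hu q) (Hu x)); auto; try apply Htq; try apply Htx.
  intros t Ht. rewrite Rmin_right by exact Ht. apply Harr; auto; lra.
Qed.

Lemma mpgps_idle_restart m x : s (S m) <> s m + bt m -> ~ served_before B (S m) x -> s (S m) <= a x.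
Proof.
  intros Hidle Hx.
  destruct (least_witness (fun y => ~ served_before B (S m) y) x Hx) as [n0 [Hn0 Hmin]].
  assert (Hs : s (S m) = Rmax (s m + bt m) (a n0)).
  { apply mpgps_work_conserving; auto. intros m' Hm'. apply NNPP, Hmin; auto. }
  assert (Hn0x : (n0 <= x)%nat) by (destruct (Nat.le_gt_cases n0 x); auto; exfalso; apply (Hmin x); auto).
  unfold Rmax in Hs. destruct (Rle_dec (s m + bt m) (a n0)); [|contradiction].
  rewrite Hs. apply Hmono, Hn0x.
Qed.

(* The last run opening before batch [h] plays the role of the start of a busy period. *)
Definition opens_run d j := j = 0%nat \/ exists m, j = S m /\
  (s (S m) <> s m + bt m \/ exists q, In q (B m) /\ ~ gps_done_by d q).

Lemma last_run_opening d h :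
  exists j, (j <= h)%nat /\ opens_run d j /\ forall i, (j < i <= h)%nat -> ~ opens_run d i.
Proof.
  induction h as [|h IH].
  - exists 0%nat. split; [lia|]. split; [now left|]. intros; lia.
  - destruct (classic (opens_run d (S h))) as [Hs|Hs].
    + exists (S h). split; [lia|]. split; auto. intros; lia.
    + destruct IH as [j [Hj [Hsj Hn]]]. exists j. split; [lia|]. split; auto.
      intros i Hi. destruct (Nat.eq_dec i (S h)) as [->|Hne]; auto. apply Hn; lia.
Qed.

Lemma not_opens_run d m : ~ opens_run d (S m) ->
  s (S m) = s m + bt m /\ forall q, In q (B m) -> gps_done_by d q.
Proof.
  intros Hn. split.
  - apply NNPP. intros H. apply Hn. right. exists m. auto.
  - intros q Hq. apply NNPP. intros H. apply Hn. right. exists m. split; eauto.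
Qed.

Lemma run_start_time d j h : (forall i, (j < i <= h)%nat -> ~ opens_run d i) ->
  forall k, (j + k <= h)%nat -> s (j + k)%nat = s j + sumR (seq j k) (fun i => bt i).
Proof.
  intros Hn k. induction k as [|k IH]; intros Hk.
  - rewrite Nat.add_0_r. unfold sumR; simpl; lra.
  - rewrite seq_S, sumR_app. replace (j + S k)%nat with (S (j + k)) by lia.
    rewrite (proj1 (not_opens_run d (j + k) (Hn (S (j + k)) ltac:(lia)))), IH by lia.
    unfold sumR; simpl. lra.
Qed.

Lemma batches_union j k : exists l, NoDup l /\
  INR (length l) = sumR (seq j k) (fun i => INR (length (B i))) /\
  (forall x, In x l <-> exists i, (j <= i < j + k)%nat /\ In x (B i)).
Proof.
  induction k as [|k IH].
  - exists []. split; [constructor|]. split; [unfold sumR; simpl; auto|].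
    intros x; split; [intros []|intros [i [Hi _]]; lia].
  - destruct IH as [l [Hnd [Hl Hin]]]. exists (l ++ B (j + k)%nat).
    split; [|split; [|intros x; split]].
    + apply NoDup_app; auto using mpgps_batch_NoDup. intros x Hx Hx'.
      apply Hin in Hx as [i [Hi Hxi]]. pose proof (mpgps_batch_disjoint x i (j + k) Hxi Hx'). lia.
    + rewrite length_app, plus_INR, seq_S, sumR_app, Hl. unfold sumR at 3; simpl. lra.
    + intros Hx. apply in_app_or in Hx as [Hx|Hx].
      * apply Hin in Hx as [i [Hi Hxi]]. exists i; split; auto; lia.
      * exists (j + k)%nat; split; auto; lia.
    + intros [i [Hi Hxi]]. apply in_or_app. destruct (Nat.eq_dec i (j + k)) as [->|Hne]; auto.
      left. apply Hin. exists i; split; auto; lia.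
Qed.

(* In the third case of [opens_run], a packet waiting already at [s m] would have been finished
   by GPS after the lagging packet of batch [m]. *)
Lemma run_opening_anchor d j l : opens_run d j ->
  (forall x, In x l -> ~ served_before B j x /\ gps_done_by d x) ->
  exists T, (forall x, In x l -> T <= a x) /\ T <= s j <= T + INR M * (L / NR).
Proof.
  intros Hj Hl. pose proof (batch_time_le (Nat.pred j)) as Hbt.
  assert (HM : 0 <= INR M * (L / NR)).
  { apply Rmult_le_pos; [apply pos_INR|]. apply Rlt_le, Rdiv_lt_0_compat; auto.
    apply (gps_capacity_pos HWsys). }
  destruct Hj as [->|[m [-> Hcase]]].
  - exists (s 0%nat). split; [|lra]. intros x _. rewrite mpgps_start. apply Hmono. lia.
  - destruct (Req_dec (s (S m)) (s m + bt m)) as [Hbusy|Hidle].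
    + destruct Hcase as [Hc|[q [Hq Hnq]]]; [contradiction|].
      assert (0 <= bt m).
      { unfold batch_time. apply Rdiv_le_0_compat; [|apply (gps_capacity_pos HWsys)].
        apply Rmult_le_pos; [apply pos_INR|lra]. }
      exists (s m). split; [|simpl in Hbt; lra].
      intros x Hx. destruct (Hl x Hx) as [Hux Hdx].
      destruct (Rle_lt_dec (a x) (s m)) as [Hax|Hax]; [exfalso|lra].
      exact (Hnq (mpgps_unselected_done_later m q x d Hq Hux Hax Hdx)).
    + exists (s (S m)). split; [|lra].
      intros x Hx. exact (mpgps_idle_restart m x Hidle (proj1 (Hl x Hx))).
Qed.

Lemma mpgps_delay_bound h n d : In n (B h) -> gps_dep L u W n d ->
  s h + bt h - d <= (2 * INR M - 1) * L / NR.
Proof.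
  intros Hn Hd. pose proof (gps_capacity_pos HWsys) as HNR.
  destruct (last_run_opening d h) as [j [Hjh [Hopen Hrun]]].
  assert (Hsh : s h = s j + sumR (seq j (h - j)) (fun i => bt i)).
  { rewrite <- (run_start_time d j h Hrun (h - j)) by lia. f_equal. lia. }
  destruct (batches_union j (h - j)) as [l [Hnd [Hlen Hin]]].
  assert (Hnl : ~ In n l).
  { intros H. apply Hin in H as [i [Hi Hxi]]. pose proof (mpgps_batch_disjoint n i h Hxi Hn). lia. }
  assert (Hrun_pkts : forall x, In x (n :: l) -> ~ served_before B j x /\ gps_done_by d x).
  { intros x [<-|Hx].
    - split; [|apply Hd]. apply (not_served_before_antitone B n j h Hjh), (mpgps_batch_queued h n Hn).
    - apply Hin in Hx as [i [Hi Hxi]]. split.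
      + apply (not_served_before_antitone B x j i); [lia|]. apply (mpgps_batch_queued i x Hxi).
      + apply (proj2 (not_opens_run d i (Hrun (S i) ltac:(lia)))); auto. }
  destruct (run_opening_anchor d j (n :: l) Hopen Hrun_pkts) as [T [HT HsjT]].
  assert (Hbefore : forall x, In x (n :: l) -> W (u x) T <= (INR (fifo_pos u x) - 1) * L)
    by (intros x Hx; apply (gps_service_before_arrival HWsys Hu Hmono Hunb), HT, Hx).
  assert (HTd : T <= d).
  { destruct (Rle_lt_dec T d) as [H|H]; auto. exfalso.
    pose proof (Hbefore n (or_introl eq_refl)). pose proof (proj2 (Hrun_pkts n (or_introl eq_refl))).
    unfold gps_done_by in *.
    pose proof (gps_service_nondecr HWsys (u n) d T (Hu n) ltac:(lra)). lra. }
  pose proof (gps_packets_work_bound HWsys u (n :: l) T d HTd (NoDup_cons n Hnl Hnd)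
                (fun x _ => Hu x) (fun x Hx => proj2 (Hrun_pkts x Hx)) Hbefore) as Hwork.
  simpl length in Hwork. rewrite S_INR, Hlen in Hwork.
  assert (Hsum : sumR (seq j (h - j)) (fun i => bt i) =
                 sumR (seq j (h - j)) (fun i => INR (length (B i))) * (L / NR)).
  { rewrite Rmult_comm, <- sumR_scal. apply sumR_ext. intros i _. unfold batch_time. field. pose proof (lt_0_INR N HN); lra. }
  pose proof (batch_time_le h).
  set (S0 := sumR (seq j (h - j)) (fun i => INR (length (B i)))) in *.
  assert (Hwork' : (S0 + 1) * (L / NR) <= d - T).
  { apply (Rmult_le_reg_r NR); auto. replace ((S0 + 1) * (L / NR) * NR) with ((S0 + 1) * L)
      by (field; pose proof (lt_0_INR N HN); lra). lra. }
  replace ((2 * INR M - 1) * L / NR) with ((2 * INR M - 1) * (L / NR)) by (unfold Rdiv; ring).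
  lra.
Qed.

End MPGPS.

Theorem theorem1 (K N M : nat) (r L : R) (phi : nat -> R)
  (a : nat -> R) (u : nat -> nat)
  (W : nat -> R -> R) (s : nat -> R) (B : nat -> list nat)
  (Wh : nat -> nat -> R -> R) :
  (0 < K)%nat -> (0 < N)%nat -> (1 <= M)%nat -> 0 < r -> 0 < L ->
  (forall k, (k < K)%nat -> 0 < phi k) ->
  (forall n, (u n < K)%nat) ->
  (forall n, 0 <= a n) ->
  (forall n m, (n <= m)%nat -> a n <= a m) ->
  (forall T, exists n, T < a n) ->
  is_GPS K N r phi L (arrived_count a u) W ->
  is_MPGPS K N M r phi L a u s B Wh ->
  forall h n, In n (B h) ->
  forall d, gps_dep L u W n d ->
  mpgps_dep N r L s B h - d <= (2 * INR M - 1) * L / (INR N * r).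
Proof.
  intros _ HN _ Hr HL Hphi Hu _ Hmono Hunb HW HMP h n Hn d Hd.
  exact (mpgps_delay_bound HN Hr HL Hphi Hu Hmono Hunb HW HMP h n d Hn Hd).
Qed.
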